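(* Let $(X,\mathrm{dist})$ be a metric space with doubling dimension $\gamma$, let $P\subseteq X$ be a set of $n$ points with aspect ratio $\alpha$, and let $s>1$. Let $G$ be the final graph of the uncoordinated construction (described in the context) on $P$ with parameter $s$. Then $G$ is a spanner with stretch factor $(s+1)/(s-1)$ (for all $p,q\in P$ the shortest path length in $G$ is at most $\frac{s+1}{s-1}\mathrm{dist}(p,q)$), has total edge weight $O(\gamma^9\cdot\lg\alpha\cdot|\mathrm{MST}|\cdot s^{O(\gamma)})$, has $O(\gamma^4\cdot n\cdot s^{O(\gamma)})$ edges, has maximum degree $O(\gamma^4\cdot\lg\alpha\cdot s^{O(\gamma)})$ and average degree $O(\gamma^4\cdot s^{O(\gamma)})$.
   Context: The doubling dimension of a metric space $(X,\mathrm{dist})$ is the smallest $\gamma$ such that every ball of radius $R$ can be covered by at most $2^\gamma$ balls of radius $R/2$; here $\gamma$ is a constant. $\lg$ is logarithm base 2. The aspect ratio is $\alpha=\max_{u,v\in P}\mathrm{dist}(u,v)/\min_{u\ne v\in P}\mathrm{dist}(u,v)$; $|\mathrm{MST}|$ is the total weight of a minimum spanning tree of $P$ under $\mathrm{dist}$. Edges of $G$ are weighted by $\mathrm{dist}$ between endpoints. Uncoordinated construction: start with the graph $G$ on vertex set $P$ with no edges. Every ordered pair $(p,q)$ of distinct points of $P$ is processed exactly once, in an arbitrary order, one at a time. When $(p,q)$ is processed, the edge $pq$ is added to $G$ unless $G$ currently contains an edge whose endpoints can be labeled $p',q'$ with $\mathrm{dist}(p,p')\le \mathrm{dist}(p',q')/(2s+2)$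 and $\mathrm{dist}(q,q')\le \mathrm{dist}(p',q')/(2s+2)$. $G$ is the graph after all pairs are processed. *)

From Stdlib Require Import Reals Lra List ClassicalEpsilon.
Import ListNotations.
Open Scope R_scope.

Section Defs.
Variable X : Type.
Variable dist : X -> X -> R.

Definition is_metric : Prop :=
  (forall x y, 0 <= dist x y) /\
  (forall x y, dist x y = 0 <-> x = y) /\
  (forall x y, dist x y = dist y x) /\
  (forall x y z, dist x z <= dist x y + dist y z).

Definition is_doubling (g : R) : Prop :=
  forall (x : X) (Rad : R), 0 < Rad ->
    exists cs : list X,
      INR (length cs) <= Rpower 2 g /\
      forall y, dist x y <= Rad -> exists c, In c cs /\ dist c y <= Rad / 2.

Definition doubling_dimension (g : R) : Prop :=
  is_doubling g /\ forall g', is_doubling g' -> g <= g'.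

Definition lg (x : R) : R := ln x / ln 2.

Definition aspect_ratio (P : list X) (a : R) : Prop :=
  exists dmax dmin : R,
    (exists p q, In p P /\ In q P /\ p <> q /\ dist p q = dmax) /\
    (forall p q, In p P -> In q P -> p <> q -> dist p q <= dmax) /\
    (exists p q, In p P /\ In q P /\ p <> q /\ dist p q = dmin) /\
    (forall p q, In p P -> In q P -> p <> q -> dmin <= dist p q) /\
    a = dmax / dmin.

(* graphs on X are given by lists of edges (ordered pairs, read as undirected) *)
Definition adj (G : list (X * X)) (x y : X) : Prop :=
  In (x, y) G \/ In (y, x) G.

Inductive walk_len (G : list (X * X)) : X -> X -> R -> Prop :=
| walk_refl p : walk_len G p p 0
| walk_step p u q L : adj G p u -> walk_len G u q L -> walk_len G p q (dist p u + L).

Definition weight (G : list (X * X)) : R :=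
  fold_right (fun e acc => dist (fst e) (snd e) + acc) 0 G.

Definition spanning_tree (P : list X) (T : list (X * X)) : Prop :=
  (forall a b, In (a, b) T -> In a P /\ In b P /\ a <> b) /\
  length T = (length P - 1)%nat /\
  (forall p q, In p P -> In q P -> exists L, walk_len T p q L).

Definition mst_weight (P : list X) (w : R) : Prop :=
  (exists T, spanning_tree P T /\ weight T = w) /\
  (forall T, spanning_tree P T -> w <= weight T).

Definition blocked (s : R) (G : list (X * X)) (p q : X) : Prop :=
  exists a b, In (a, b) G /\
    ((dist p a <= dist a b / (2 * s + 2) /\ dist q b <= dist a b / (2 * s + 2)) \/
     (dist p b <= dist b a / (2 * s + 2) /\ dist q a <= dist b a / (2 * s + 2))).

Inductive run (s : R) : list (X * X) -> list (X * X) -> list (X * X) -> Prop :=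
| run_nil G : run s G [] G
| run_skip G p q rest G' :
    blocked s G p q -> run s G rest G' -> run s G ((p, q) :: rest) G'
| run_add G p q rest G' :
    ~ blocked s G p q -> run s (G ++ [(p, q)]) rest G' -> run s G ((p, q) :: rest) G'.

Definition valid_order (P : list X) (ord : list (X * X)) : Prop :=
  NoDup ord /\ forall p q, In (p, q) ord <-> (In p P /\ In q P /\ p <> q).

Definition degree (G : list (X * X)) (v : X) : nat :=
  length (filter (fun e => if excluded_middle_informative (fst e = v \/ snd e = v)
                           then true else false) G).

End Defs.

Arguments walk_len {X} dist G _ _ _.

(* Stretch: order the pairs by length.  A pair (p, q) that was skipped is blocked by an
   edge ab with p, q within |ab|/(2s+2) of a, b; then |pa| and |bq| are shorter than |pq|,
   and the walk p ~ a - b ~ q has length at most (s+1)/(s-1) |pq| by induction.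

   Size: two edges of G are never "close" at scale |e|/(2s+2), since the later one would
   have been blocked.  Split the edges into the 1 + lg alpha dyadic length bands.  In band j
   the far ends of the edges at a vertex are separated at scale 2^j dmin/(2s+2), so the
   doubling packing bound limits the degree per band.  Snapping endpoints to a net of the
   band's scale, a band edge is determined by its two net points, which gives at most
   2^{O(gamma lg s)} edges per net point; charging each edge to a net point that leaves
   the nested nets within O(lg s) levels counts O(n) edges in total.  Finally a tree
   connecting an r-separated set of N points weighs at least N r / 2 (sum over the points
   of 1-Lipschitz bumps of height r/2), so each band weighs O(|MST|). *)

From Stdlib Require Import Reals Lra Lia List ClassicalEpsilon Permutation.
Import ListNotations.
Open Scope R_scope.

Definition dec (P : Prop) : bool := if excluded_middle_informative P then true else false.

Lemma decP (P : Prop) : dec P = true <-> P.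
Proof. unfold dec; destruct (excluded_middle_informative P); split; intros; auto; discriminate. Qed.

Lemma decF (P : Prop) : dec P = false <-> ~ P.
Proof.
  unfold dec; destruct (excluded_middle_informative P); split; intros; auto; try discriminate.
  contradiction.
Qed.

Definition indic (P : Prop) : R := if dec P then 1 else 0.

Lemma indic_ge0 (P : Prop) : 0 <= indic P.
Proof. unfold indic; destruct (dec P); lra. Qed.

Definition sumR {A} (f : A -> R) (l : list A) : R := fold_right (fun a acc => f a + acc) 0 l.

Lemma sumR_nil {A} (f : A -> R) : sumR f [] = 0. Proof. reflexivity. Qed.
Lemma sumR_cons {A} (f : A -> R) a l : sumR f (a :: l) = f a + sumR f l. Proof. reflexivity. Qed.
Arguments sumR : simpl never.

Lemma sumR_app {A} (f : A -> R) l1 l2 : sumR f (l1 ++ l2) = sumR f l1 + sumR f l2.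
Proof. induction l1; simpl; rewrite ?sumR_nil, ?sumR_cons, ?IHl1; lra. Qed.

Lemma sumR_ext {A} (f g : A -> R) l : (forall a, In a l -> f a = g a) -> sumR f l = sumR g l.
Proof.
  induction l; intros H; [reflexivity|]. rewrite !sumR_cons.
  f_equal; [apply H; left; auto | apply IHl; intros; apply H; right; auto].
Qed.

Lemma sumR_le {A} (f g : A -> R) l : (forall a, In a l -> f a <= g a) -> sumR f l <= sumR g l.
Proof.
  induction l; intros H; rewrite ?sumR_nil, ?sumR_cons; [lra|].
  assert (f a <= g a) by (apply H; left; auto).
  assert (sumR f l <= sumR g l) by (apply IHl; intros; apply H; right; auto). lra.
Qed.

Lemma sumR_plus {A} (f g : A -> R) l : sumR (fun a => f a + g a) l = sumR f l + sumR g l.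
Proof. induction l; rewrite ?sumR_nil, ?sumR_cons, ?IHl; lra. Qed.

Lemma sumR_scale {A} (c : R) (f : A -> R) l : sumR (fun a => c * f a) l = c * sumR f l.
Proof. induction l; rewrite ?sumR_nil, ?sumR_cons, ?IHl; lra. Qed.

Lemma sumR_const {A} (c : R) (l : list A) : sumR (fun _ => c) l = c * INR (length l).
Proof. induction l; simpl length; rewrite ?sumR_nil, ?sumR_cons, ?IHl, ?S_INR; simpl; lra. Qed.

Lemma sumR_nonneg {A} (f : A -> R) l : (forall a, In a l -> 0 <= f a) -> 0 <= sumR f l.
Proof. intro H. rewrite <- (Rmult_0_l (INR (length l))), <- sumR_const. now apply sumR_le. Qed.

Lemma sumR_exchange {A B} (g : A -> B -> R) l1 l2 :
  sumR (fun a => sumR (g a) l2) l1 = sumR (fun b => sumR (fun a => g a b) l1) l2.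
Proof.
  induction l1; rewrite ?sumR_cons.
  - rewrite sumR_nil. rewrite <- (Rmult_0_l (INR (length l2))), <- sumR_const. reflexivity.
  - rewrite IHl1, <- sumR_plus. reflexivity.
Qed.

Lemma sumR_ge_term {A} (f : A -> R) l c :
  In c l -> (forall a, In a l -> 0 <= f a) -> f c <= sumR f l.
Proof.
  induction l; intros Hc Hn; [destruct Hc|]. rewrite sumR_cons.
  assert (0 <= f a) by (apply Hn; left; auto).
  assert (0 <= sumR f l) by (apply sumR_nonneg; intros; apply Hn; right; auto).
  destruct Hc as [->|Hc]; [lra|].
  assert (f c <= sumR f l) by (apply IHl; auto; intros; apply Hn; right; auto). lra.
Qed.

Lemma INR_length_sumR {A} (l : list A) : INR (length l) = sumR (fun _ => 1) l.
Proof. rewrite sumR_const. ring. Qed.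

Lemma INR_length_filter {A} (p : A -> bool) l :
  INR (length (filter p l)) = sumR (fun a => if p a then 1 else 0) l.
Proof.
  induction l; simpl; [reflexivity|]. rewrite sumR_cons.
  destruct (p a); simpl length; rewrite ?S_INR; lra.
Qed.

Lemma sumR_point_mass {B} (z0 : B) (c : R) (P : list B) :
  NoDup P -> In z0 P -> sumR (fun z => if dec (z0 = z) then c else 0) P = c.
Proof.
  induction 1 as [|a P Ha HP IH]; intros Hin; [destruct Hin|]. rewrite sumR_cons.
  destruct Hin as [->|Hin].
  - rewrite (proj2 (decP _) eq_refl), (sumR_ext _ (fun _ => 0)), sumR_const; [lra|].
    intros z Hz. destruct (dec (z0 = z)) eqn:E; auto.
    apply (proj1 (decP _)) in E; subst; contradiction.
  - rewrite IH by auto. destruct (dec (z0 = a)) eqn:E; [|lra].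
    apply (proj1 (decP _)) in E; subst; contradiction.
Qed.

Lemma sum_partition {A B} (f : A -> R) (g : A -> B) (l : list A) (P : list B) :
  NoDup P -> (forall a, In a l -> In (g a) P) ->
  sumR f l = sumR (fun z => sumR f (filter (fun a => dec (g a = z)) l)) P.
Proof.
  intros HP. induction l as [|a l IHl]; intros H.
  - transitivity (sumR (fun _ : B => 0) P); [rewrite sumR_const, sumR_nil; lra|].
    apply sumR_ext. reflexivity.
  - rewrite (sumR_ext _ (fun z => (if dec (g a = z) then f a else 0)
                                   + sumR f (filter (fun a0 => dec (g a0 = z)) l))).
    + rewrite sumR_plus, sumR_point_mass, <- IHl, sumR_cons; auto.
      * intros; apply H; right; auto.
      * apply H; left; auto.
    + intros z _. simpl. destruct (dec (g a = z)); rewrite ?sumR_cons; lra.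
Qed.

Lemma count_partition {A B} (g : A -> B) (l : list A) (P : list B) :
  NoDup P -> (forall a, In a l -> In (g a) P) ->
  INR (length l) = sumR (fun z => INR (length (filter (fun a => dec (g a = z)) l))) P.
Proof.
  intros HP H. rewrite INR_length_sumR, (sum_partition _ g l P HP H).
  apply sumR_ext. intros. now rewrite INR_length_sumR.
Qed.

Lemma cover_count {A B} (p : B -> A -> bool) (S : list A) (cs : list B) :
  (forall y, In y S -> exists c, In c cs /\ p c y = true) ->
  INR (length S) <= sumR (fun c => INR (length (filter (p c) S))) cs.
Proof.
  intros H. rewrite INR_length_sumR.
  rewrite (sumR_ext _ (fun c => sumR (fun y => if p c y then 1 else 0) S))
    by (intros; apply INR_length_filter).
  rewrite sumR_exchange. apply sumR_le. intros y Hy.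
  destruct (H y Hy) as [c [Hc Hpc]].
  replace 1 with (if p c y then 1 else 0) at 1 by (rewrite Hpc; auto).
  apply (sumR_ge_term (fun c => if p c y then 1 else 0)); auto.
  intros; destruct (p a y); lra.
Qed.

Lemma injective_length_le {A B} (F : A -> B) (l : list A) (m : list B) :
  NoDup l -> (forall a, In a l -> In (F a) m) ->
  (forall a b, In a l -> In b l -> F a = F b -> a = b) ->
  (length l <= length m)%nat.
Proof.
  intros Hl Hm Hi. rewrite <- (length_map F l). apply NoDup_incl_length.
  - clear Hm. induction Hl; simpl; constructor.
    + intro H'. apply in_map_iff in H'. destruct H' as [y [E Hy]].
      assert (y = x) by (apply Hi; simpl; auto). subst. contradiction.
    + apply IHHl. intros; apply Hi; simpl; auto.
  - intros b Hb. apply in_map_iff in Hb. destruct Hb as [a [<- Ha]]. auto.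
Qed.

Lemma list_nil_or_In {A} (l : list A) : l = [] \/ exists a, In a l.
Proof. destruct l as [|a l]; [left|right; exists a; left]; auto. Qed.

Lemma length_le1_eq {A} (l : list A) x y : (length l <= 1)%nat -> In x l -> In y l -> x = y.
Proof.
  destruct l as [|a [|b l]]; simpl; intros; try lia; try tauto.
  destruct H0 as [<-|[]]; destruct H1 as [<-|[]]; auto.
Qed.

Lemma filter_length_lt {A} (p q : A -> bool) l x :
  (forall a, p a = true -> q a = true) -> In x l -> q x = true -> p x = false ->
  (length (filter p l) < length (filter q l))%nat.
Proof.
  intros Hpq. assert (Hle : forall l', (length (filter p l') <= length (filter q l'))%nat).
  { induction l'; simpl; [lia|].
    destruct (p a) eqn:E; [rewrite (Hpq _ E); simpl; lia|]. destruct (q a); simpl; lia. }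
  induction l; intros Hx Hq Hp; [destruct Hx|]. destruct Hx as [<-|Hx].
  - simpl. rewrite Hp, Hq. simpl. specialize (Hle l). lia.
  - simpl. specialize (IHl Hx Hq Hp).
    destruct (p a) eqn:E; [rewrite (Hpq _ E); simpl; lia|]. destruct (q a); simpl; lia.
Qed.

Lemma sparse_indices_count (Q : nat -> Prop) (m a n : nat) :
  (forall i j, Q i -> Q j -> (i + m <= j)%nat -> False) ->
  sumR (fun j => indic (Q j)) (seq a n) <= INR (2 * m).
Proof.
  intro H. unfold indic. rewrite <- INR_length_filter. apply le_INR.
  destruct (filter (fun j => dec (Q j)) (seq a n)) as [|i0 L] eqn:EL; [simpl; lia|].
  assert (Hi0 : Q i0).
  { assert (In i0 (filter (fun j => dec (Q j)) (seq a n))) by (rewrite EL; left; auto).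
    apply filter_In in H0. apply (proj1 (decP _)). tauto. }
  rewrite <- EL. replace (2 * m)%nat with (length (seq (i0 - m) (2 * m))) by apply length_seq.
  apply NoDup_incl_length; [apply NoDup_filter, seq_NoDup|].
  intros j Hj. apply filter_In in Hj. destruct Hj as [_ Hj]. apply (proj1 (decP _)) in Hj.
  apply in_seq. assert (~ (i0 + m <= j)%nat) by (intro H1; exact (H i0 j Hi0 Hj H1)).
  assert (~ (j + m <= i0)%nat) by (intro H1; exact (H j i0 Hj Hi0 H1)). lia.
Qed.

Lemma app_last_split {A} (l1 : list A) f l2 l x :
  l1 ++ f :: l2 = l ++ [x] ->
  (l2 = [] /\ l1 = l /\ f = x) \/ (exists l2', l2 = l2' ++ [x] /\ l = l1 ++ f :: l2').
Proof.
  intro H. destruct l2 as [|y l2].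
  - left. apply app_inj_tail in H. destruct H; subst; auto.
  - right. destruct (exists_last (l := y :: l2)) as [l2' [z Ez]]; [discriminate|].
    rewrite Ez, app_comm_cons, app_assoc in H. apply app_inj_tail in H.
    destruct H as [H1 H2]. subst. exists l2'. split; auto.
Qed.

Lemma NoDup_from_split {A} (l : list A) :
  (forall l1 f l2, l = l1 ++ f :: l2 -> ~ In f l1) -> NoDup l.
Proof.
  induction l using rev_ind; intros H; [constructor|].
  apply Permutation_NoDup with (l := x :: l); [apply Permutation_cons_append|].
  constructor.
  - apply (H l x []). reflexivity.
  - apply IHl. intros l1 f l2 E. apply (H l1 f (l2 ++ [x])). rewrite E, <- app_assoc. reflexivity.
Qed.

(** * The greedy run and its stretch *)

Section Metric.
Variable X : Type.
Variable d : X -> X -> R.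
Hypothesis Hm : is_metric X d.

Lemma d_nonneg x y : 0 <= d x y. Proof. apply Hm. Qed.
Lemma d_refl x : d x x = 0. Proof. apply Hm. reflexivity. Qed.
Lemma d_sym x y : d x y = d y x. Proof. apply Hm. Qed.
Lemma d_tri x y z : d x z <= d x y + d y z. Proof. apply Hm. Qed.

Lemma d_pos x y : x <> y -> 0 < d x y.
Proof.
  intro H. destruct (d_nonneg x y) as [H'|H']; auto.
  exfalso. apply H. apply Hm. auto.
Qed.

Definition len (e : X * X) : R := d (fst e) (snd e).

Lemma weight_nonneg T : 0 <= weight X d T.
Proof. induction T; simpl; [lra|]. pose proof (d_nonneg (fst a) (snd a)). lra. Qed.

Definition edges_close (r : R) (e f : X * X) : Prop :=
  (d (fst e) (fst f) <= r /\ d (snd e) (snd f) <= r) \/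
  (d (fst e) (snd f) <= r /\ d (snd e) (fst f) <= r).

Lemma edges_close_sym r e f : edges_close r e f -> edges_close r f e.
Proof. unfold edges_close. rewrite !(d_sym (fst f)), !(d_sym (snd f)). tauto. Qed.

Variable s : R.
Hypothesis Hs : 1 < s.

Definition unblocked_sequence (G : list (X * X)) : Prop :=
  forall A f B, G = A ++ f :: B -> ~ blocked X d s A (fst f) (snd f).

Lemma blocked_incl G G' p q : incl G G' -> blocked X d s G p q -> blocked X d s G' p q.
Proof. intros Hi [a [b [H1 H2]]]. exists a, b. split; auto. Qed.

Lemma run_invariant G0 ord G : run X d s G0 ord G ->
  (unblocked_sequence G0 -> unblocked_sequence G) /\
  (forall e, In e ord -> In e G \/ blocked X d s G (fst e) (snd e)) /\
  (forall e, In e G -> In e G0 \/ In e ord) /\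
  incl G0 G.
Proof.
  induction 1 as [G|G p q rest G' Hb Hr IH|G p q rest G' Hb Hr IH].
  - repeat split; auto; [intros e []|apply incl_refl].
  - destruct IH as [IH1 [IH2 [IH3 IH4]]]. repeat split; auto.
    + intros e [<-|He]; auto. right. eapply blocked_incl; eauto.
    + intros e He. destruct (IH3 e He); auto. right; right; auto.
  - destruct IH as [IH1 [IH2 [IH3 IH4]]]. repeat split.
    + intro HS. apply IH1. intros A f B E HB. symmetry in E. apply app_last_split in E.
      destruct E as [[_ [-> ->]]|[l2' [_ E]]]; [contradiction|].
      apply (HS A f l2' E HB).
    + intros e [<-|He]; auto. left. apply IH4, in_or_app. right; left; auto.
    + intros e He. destruct (IH3 e He) as [H|H]; [|right; right; auto].
      apply in_app_or in H. destruct H as [H|[<-|[]]]; auto. right; left; auto.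
    + intros e He. apply IH4, in_or_app. auto.
Qed.

Lemma run_from_empty ord G : run X d s [] ord G ->
  unblocked_sequence G /\
  (forall e, In e ord -> In e G \/ blocked X d s G (fst e) (snd e)) /\
  incl G ord.
Proof.
  intro Hr. destruct (run_invariant [] ord G Hr) as [H1 [H2 [H3 _]]]. repeat split; auto.
  - apply H1. intros A f B E. destruct A; discriminate.
  - intros e He. destruct (H3 e He) as [[]|H]; auto.
Qed.

Lemma close_edge_blocks A e f r :
  In e A -> r <= len e / (2 * s + 2) -> edges_close r e f -> blocked X d s A (fst f) (snd f).
Proof.
  intros HA Hr Hc. exists (fst e), (snd e). destruct e as [a b]. simpl in *. split; auto.
  unfold len in Hr. simpl in Hr.
  destruct Hc as [[H1 H2]|[H1 H2]]; simpl in H1, H2; rewrite d_sym in H1, H2.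
  - left. split; lra.
  - right. rewrite (d_sym b a). split; lra.
Qed.

(* Whichever of two close edges came later would have been blocked by the earlier one. *)
Lemma unblocked_not_close G e f r : unblocked_sequence G -> In e G -> In f G -> e <> f ->
  r <= len e / (2 * s + 2) -> r <= len f / (2 * s + 2) -> ~ edges_close r e f.
Proof.
  intros HS He Hf Hne Hre Hrf Hc. apply in_split in Hf. destruct Hf as [A [B EG]].
  assert (He' := He). rewrite EG in He'. apply in_app_or in He'. destruct He' as [HA|[Hef|HB]].
  - apply (HS A f B EG). eapply close_edge_blocks; eauto.
  - congruence.
  - apply in_split in HB. destruct HB as [B1 [B2 EB]]. subst B.
    apply (HS (A ++ f :: B1) e B2); [rewrite EG, <- app_assoc; reflexivity|].
    eapply close_edge_blocks; [|eauto|apply edges_close_sym; eauto].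
    apply in_or_app; right; left; auto.
Qed.

Lemma unblocked_NoDup G : unblocked_sequence G -> NoDup G.
Proof.
  intro HS. apply NoDup_from_split. intros l1 f l2 E Hin. apply (HS l1 f l2 E).
  apply (close_edge_blocks l1 f f 0); auto.
  - unfold len. apply Rmult_le_pos; [apply d_nonneg|]. left; apply Rinv_0_lt_compat; lra.
  - left. rewrite !d_refl. lra.
Qed.

Lemma blocking_ends_shorter a b D E :
  0 < D -> a <= E / (2 * s + 2) -> b <= E / (2 * s + 2) -> E <= a + D + b -> a < D /\ b < D.
Proof.
  intros HD Ha Hb HE. assert (Hk : 0 < 2 * s + 2) by lra.
  assert (a * (2 * s + 2) <= E) by (apply Rmult_le_reg_r with (/ (2 * s + 2));
    [apply Rinv_0_lt_compat; lra|rewrite Rmult_assoc, Rinv_r; lra]).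
  assert (b * (2 * s + 2) <= E) by (apply Rmult_le_reg_r with (/ (2 * s + 2));
    [apply Rinv_0_lt_compat; lra|rewrite Rmult_assoc, Rinv_r; lra]).
  split; nra.
Qed.

(* The two blocking conditions give [s E <= (s + 1) D], which pays for the detour. *)
Lemma detour_within_stretch a b D E L1 L2 :
  0 <= a -> 0 <= b -> a <= E / (2 * s + 2) -> b <= E / (2 * s + 2) -> E <= a + D + b ->
  L1 <= (s + 1) / (s - 1) * a -> L2 <= (s + 1) / (s - 1) * b ->
  L1 + (E + L2) <= (s + 1) / (s - 1) * D.
Proof.
  intros Ha0 Hb0 Ha Hb HE H1 H2. assert (Hk : 0 < 2 * s + 2) by lra.
  assert (a * (2 * s + 2) <= E) by (apply Rmult_le_reg_r with (/ (2 * s + 2));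
    [apply Rinv_0_lt_compat; lra|rewrite Rmult_assoc, Rinv_r; lra]).
  assert (b * (2 * s + 2) <= E) by (apply Rmult_le_reg_r with (/ (2 * s + 2));
    [apply Rinv_0_lt_compat; lra|rewrite Rmult_assoc, Rinv_r; lra]).
  assert (Hsub : (s - 1) * ((s + 1) / (s - 1)) = s + 1) by (field; lra).
  assert ((s - 1) * L1 <= (s + 1) * a) by nra.
  assert ((s - 1) * L2 <= (s + 1) * b) by nra.
  assert (Hab : (s + 1) * (a + b) <= E) by nra.
  assert (HsE : s * E <= (s + 1) * D) by nra.
  apply Rmult_le_reg_l with (s - 1); [lra|].
  rewrite <- Rmult_assoc, Hsub. nra.
Qed.

Lemma stretch_ge1 : 1 <= (s + 1) / (s - 1).
Proof. apply Rmult_le_reg_r with (s - 1); [lra|]. unfold Rdiv. rewrite Rmult_assoc, Rinv_l; lra. Qed.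

Section Stretch.
Variable P : list X.
Variables ord G : list (X * X).
Hypothesis Hord : forall p q, In p P -> In q P -> p <> q -> In (p, q) ord.
Hypothesis HordP : forall e, In e ord -> In (fst e) P /\ In (snd e) P /\ fst e <> snd e.
Hypothesis Hcov : forall e, In e ord -> In e G \/ blocked X d s G (fst e) (snd e).
Hypothesis HG : incl G ord.

Definition shorter_pairs (D : R) : nat := length (filter (fun e => dec (len e < D)) ord).

Lemma shorter_pairs_lt x y D : In (x, y) ord -> d x y < D -> (shorter_pairs (d x y) < shorter_pairs D)%nat.
Proof.
  intros Hin HD. apply (filter_length_lt _ _ _ (x, y)); auto.
  - intros a Ha. apply (proj1 (decP _)) in Ha. apply (proj2 (decP _)). lra.
  - apply (proj2 (decP _)). auto.
  - apply (proj2 (decF _)). unfold len; simpl. lra.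
Qed.

Lemma walk_app p a q L1 L2 :
  walk_len d G p a L1 -> walk_len d G a q L2 -> walk_len d G p q (L1 + L2).
Proof.
  induction 1; intros H2; [replace (0 + L2) with L2 by lra; auto|].
  replace (d p u + L + L2) with (d p u + (L + L2)) by lra. constructor; auto.
Qed.

Lemma walk_through_edge p u v q L1 L2 : walk_len d G p u L1 -> adj X G u v -> walk_len d G v q L2 ->
  walk_len d G p q (L1 + (d u v + L2)).
Proof. intros W1 Huv W2. apply walk_app with u; auto. apply walk_step; auto. Qed.

(* Induction on the number of pairs shorter than [d p q]: a pair is either an edge or is
   blocked by an edge whose ends are joined to [p] and [q] through strictly shorter pairs. *)
Lemma stretch_by_rank : forall n p q, (shorter_pairs (d p q) < n)%nat -> In p P -> In q P ->
  exists L, walk_len d G p q L /\ L <= (s + 1) / (s - 1) * d p q.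
Proof.
  induction n; intros p q Hn Hp Hq; [lia|].
  destruct (excluded_middle_informative (p = q)) as [<-|Hpq].
  { exists 0. split; [constructor|]. rewrite d_refl. lra. }
  assert (IH : forall x y, In x P -> In y P -> d x y < d p q ->
             exists L, walk_len d G x y L /\ L <= (s + 1) / (s - 1) * d x y).
  { intros x y Hx Hy Hxy. destruct (excluded_middle_informative (x = y)) as [<-|Hne].
    - exists 0. split; [constructor|]. rewrite d_refl. lra.
    - apply IHn; auto. pose proof (shorter_pairs_lt x y (d p q) (Hord x y Hx Hy Hne) Hxy). lia. }
  pose proof stretch_ge1. pose proof (d_pos p q Hpq) as HD.
  assert (Hdetour : forall u v, adj X G u v -> In u P -> In v P ->
            d p u <= d u v / (2 * s + 2) -> d q v <= d u v / (2 * s + 2) ->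
            exists L, walk_len d G p q L /\ L <= (s + 1) / (s - 1) * d p q).
  { intros u v Huv Hu Hv H1 H2.
    assert (Htri : d u v <= d p u + d p q + d q v).
    { pose proof (d_tri u p v). pose proof (d_tri p q v). pose proof (d_sym u p). pose proof (d_sym v q).
      lra. }
    destruct (blocking_ends_shorter _ _ _ _ HD H1 H2 Htri) as [Hpu Hqv].
    destruct (IH p u Hp Hu Hpu) as [L1 [W1 B1]].
    rewrite d_sym in Hqv. destruct (IH v q Hv Hq Hqv) as [L2 [W2 B2]]. rewrite d_sym in B2.
    exists (L1 + (d u v + L2)). split; [eapply walk_through_edge; eauto|].
    apply (detour_within_stretch (d p u) (d q v)); auto using d_nonneg. }
  destruct (Hcov (p, q) (Hord p q Hp Hq Hpq)) as [HinG|[a [b [HabG Hcl]]]].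
  - exists (d p q + 0). split; [apply walk_step; [left; auto|constructor]|].
    pose proof (d_nonneg p q). nra.
  - destruct (HordP _ (HG _ HabG)) as [Ha [Hb _]]. simpl in *.
    destruct Hcl as [[H1 H2]|[H1 H2]].
    + apply (Hdetour a b); auto. left; auto.
    + apply (Hdetour b a); auto. right; auto.
Qed.

Lemma greedy_stretch p q : In p P -> In q P ->
  exists L, walk_len d G p q L /\ L <= (s + 1) / (s - 1) * d p q.
Proof. apply (stretch_by_rank (S (shorter_pairs (d p q)))). lia. Qed.

End Stretch.
End Metric.

(** * Packing and nets in doubling spaces *)

Section Packing.
Variable X : Type.
Variable d : X -> X -> R.
Hypothesis Hm : is_metric X d.
Variable g : R.
Hypothesis Hdb : is_doubling X d g.

Definition doubling_const : R := Rpower 2 g.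

Lemma doubling_const_pos : 0 < doubling_const.
Proof. apply exp_pos. Qed.

Lemma doubling_const_pow_ge0 M : 0 <= doubling_const ^ M.
Proof. apply pow_le. left. apply doubling_const_pos. Qed.

(* Halve the radius [M] times; a ball of radius below half the separation holds one point. *)
Lemma doubling_packing : forall (M : nat) (x : X) (Rad r : R) (S : list X),
  0 < Rad -> 0 < r -> NoDup S -> (forall y, In y S -> d x y <= Rad) ->
  (forall y z, In y S -> In z S -> y <> z -> r < d y z) -> 2 * Rad <= 2 ^ M * r ->
  INR (length S) <= doubling_const ^ M.
Proof.
  induction M; intros x Rad r S HR Hr HN Hin Hsep HM.
  - simpl in *. destruct S as [|a [|b S]]; simpl; try lra.
    exfalso. inversion HN; subst. assert (a <> b) by (intro; subst; apply H1; left; auto).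
    pose proof (Hsep a b (or_introl eq_refl) (or_intror (or_introl eq_refl)) H).
    pose proof (Hin a (or_introl eq_refl)). pose proof (Hin b (or_intror (or_introl eq_refl))).
    pose proof (d_tri X d Hm a x b). rewrite (d_sym X d Hm a x) in H5. lra.
  - destruct (Hdb x Rad HR) as [cs [Hcs Hcov]].
    eapply Rle_trans.
    { apply (cover_count (fun c y => dec (d c y <= Rad / 2)) S cs). intros y Hy.
      destruct (Hcov y (Hin y Hy)) as [c [Hc Hd]]. exists c. split; auto. apply (proj2 (decP _)); auto. }
    eapply Rle_trans; [apply (sumR_le _ (fun _ => doubling_const ^ M)); intros c Hc|].
    + apply (IHM c (Rad / 2) r); auto; try lra.
      * apply NoDup_filter; auto.
      * intros y Hy. apply filter_In in Hy. apply (proj1 (decP _)). tauto.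
      * intros y z Hy Hz. apply filter_In in Hy. apply filter_In in Hz. apply Hsep; tauto.
      * simpl in HM. lra.
    + rewrite sumR_const. simpl. pose proof (doubling_const_pow_ge0 M).
      rewrite Rmult_comm. apply Rmult_le_compat_r; auto.
Qed.

(* With [2^g < 2] every ball is covered by a single half ball; halving twice around one
   of two distinct points then contradicts the triangle inequality. *)
Lemma doubling_dim_ge1 (p q : X) : p <> q -> 1 <= g.
Proof.
  intro Hpq. destruct (Rle_or_lt 1 g) as [H|H]; auto. exfalso.
  assert (HK : doubling_const < 2).
  { unfold doubling_const. replace 2 with (Rpower 2 1) at 2 by (apply Rpower_1; lra).
    apply Rpower_lt; lra. }
  assert (Hsmall : forall (cs : list X), INR (length cs) <= doubling_const -> (length cs <= 1)%nat).
  { intros cs Hc. destruct (Compare_dec.le_lt_dec (length cs) 1) as [l|l]; auto.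
    apply le_INR in l. simpl in l. lra. }
  set (D := d p q). assert (HD : 0 < D) by (apply d_pos; auto).
  destruct (Hdb p D HD) as [cs [Hcs Hcov]].
  destruct (Hcov p) as [c [Hc Hcp]]; [rewrite d_refl; auto; lra|].
  destruct (Hcov q) as [c' [Hc' Hcq]]; [unfold D; lra|].
  assert (c = c') by (apply (length_le1_eq cs); auto). subst c'.
  destruct (Hdb c (D / 2)) as [cs2 [Hcs2 Hcov2]]; [lra|].
  destruct (Hcov2 p Hcp) as [e [He Hep]]. destruct (Hcov2 q Hcq) as [e' [He' Heq]].
  assert (e = e') by (apply (length_le1_eq cs2); auto). subst e'.
  pose proof (d_tri X d Hm p e q). rewrite (d_sym X d Hm p e) in H0. fold D in H0. lra.
Qed.
End Packing.

Section Nets.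
Variable X : Type.
Variable d : X -> X -> R.
Hypothesis Hm : is_metric X d.

Definition separated (rho : R) (S : list X) : Prop :=
  forall x y, In x S -> In y S -> x <> y -> rho <= d x y.

Definition far_from (rho : R) (p : X) (acc : list X) : bool := dec (forall x, In x acc -> rho <= d p x).

Fixpoint greedy_net (rho : R) (acc l : list X) : list X :=
  match l with
  | [] => acc
  | p :: l' => greedy_net rho (if far_from rho p acc then p :: acc else acc) l'
  end.

Lemma greedy_net_incl rho : forall l acc y, In y (greedy_net rho acc l) -> In y acc \/ In y l.
Proof.
  induction l; intros acc y H; simpl in *; auto.
  destruct (IHl _ _ H) as [H'|H']; auto. destruct (far_from rho a acc); auto. destruct H'; auto.
Qed.

Lemma greedy_net_acc rho : forall l acc y, In y acc -> In y (greedy_net rho acc l).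
Proof. induction l; intros acc y H; simpl; auto. apply IHl. destruct (far_from rho a acc); simpl; auto. Qed.

Lemma greedy_net_separated rho : 0 < rho -> forall l acc, separated rho acc -> NoDup acc ->
  separated rho (greedy_net rho acc l) /\ NoDup (greedy_net rho acc l).
Proof.
  intro Hr. induction l; intros acc Hs Hn; simpl; auto. apply IHl.
  - destruct (far_from rho a acc) eqn:E; auto. apply (proj1 (decP _)) in E.
    intros x y [<-|Hx] [<-|Hy] Hne; auto; [congruence|].
    rewrite (d_sym X d Hm). apply E; auto.
  - destruct (far_from rho a acc) eqn:E; auto. apply (proj1 (decP _)) in E. constructor; auto.
    intro Ha. specialize (E a Ha). rewrite (d_refl X d Hm) in E. lra.
Qed.

Lemma greedy_net_covers rho : 0 < rho -> forall l acc p, In p l ->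
  exists u, In u (greedy_net rho acc l) /\ d p u < rho.
Proof.
  intro Hr. induction l; intros acc p Hp; [destruct Hp|]. destruct Hp as [->|Hp]; [|apply IHl; auto].
  simpl. destruct (far_from rho p acc) eqn:E.
  - exists p. split; [apply greedy_net_acc; left; auto|]. rewrite (d_refl X d Hm). lra.
  - apply (proj1 (decF _)) in E. apply Classical_Pred_Type.not_all_ex_not in E. destruct E as [x Hx].
    exists x. split.
    + apply greedy_net_acc. destruct (excluded_middle_informative (In x acc)); auto.
      exfalso; apply Hx; intro; contradiction.
    + destruct (Rlt_or_le (d p x) rho); auto. exfalso; apply Hx; intro; auto.
Qed.

Variable h0 : R.
Hypothesis Hh0 : 0 < h0.
Variable P : list X.

Definition net_radius (j : nat) : R := h0 * 2 ^ j.

Lemma net_radius_pos j : 0 < net_radius j.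
Proof. unfold net_radius. apply Rmult_lt_0_compat; auto. apply pow_lt; lra. Qed.

Lemma net_radius_S j : net_radius (S j) = 2 * net_radius j.
Proof. unfold net_radius. simpl. ring. Qed.

Lemma net_radius_add j m : net_radius (j + m) = net_radius j * 2 ^ m.
Proof. unfold net_radius. rewrite pow_add. ring. Qed.

Fixpoint net (j : nat) : list X :=
  match j with
  | O => greedy_net (net_radius 0) [] P
  | S j' => greedy_net (net_radius (S j')) [] (net j')
  end.

Lemma net_separated j : separated (net_radius j) (net j) /\ NoDup (net j).
Proof.
  destruct j; simpl; apply greedy_net_separated; try apply net_radius_pos; try apply NoDup_nil;
  intros x y [].
Qed.

Lemma net_S_incl j : incl (net (S j)) (net j).
Proof. intros y Hy. simpl in Hy. destruct (greedy_net_incl _ _ _ _ Hy) as [[]|H]; auto. Qed.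

Lemma net_incl_P j : incl (net j) P.
Proof.
  induction j; intros y Hy; [|apply IHj, net_S_incl; auto].
  simpl in Hy. destruct (greedy_net_incl _ _ _ _ Hy) as [[]|H]; auto.
Qed.

Lemma net_nested i j : (i <= j)%nat -> incl (net j) (net i).
Proof. induction 1; [apply incl_refl|]. intros y Hy. apply IHle, net_S_incl; auto. Qed.

Lemma net_covers j p : In p P -> exists u, In u (net j) /\ d p u < 2 * net_radius j.
Proof.
  intro Hp. induction j.
  - destruct (greedy_net_covers _ (net_radius_pos 0) P [] p Hp) as [u [Hu Hd]].
    exists u. split; auto. pose proof (net_radius_pos 0); lra.
  - destruct IHj as [u [Hu Hd]].
    destruct (greedy_net_covers _ (net_radius_pos (S j)) (net j) [] u Hu) as [v [Hv Hd']].
    exists v. split; auto. pose proof (d_tri X d Hm p u v). rewrite net_radius_S in *. lra.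
Qed.
End Nets.

(** * Trees on separated sets *)

Section TreeWeight.
Variable X : Type.
Variable d : X -> X -> R.
Hypothesis Hm : is_metric X d.

Inductive vpath (T : list (X * X)) : X -> X -> list X -> Prop :=
| vpath_refl p : vpath T p p [p]
| vpath_step p u q l : adj X T p u -> vpath T u q l -> vpath T p q (p :: l).

Lemma vpath_head T p q l : vpath T p q l -> exists l', l = p :: l'.
Proof. destruct 1; eauto. Qed.

Lemma vpath_suffix T : forall A u q p C, vpath T u q (A ++ p :: C) -> vpath T p q (p :: C).
Proof.
  induction A; intros u q p C H; simpl in H; inversion H; subst; auto.
  - destruct A; discriminate.
  - eapply IHA; eauto.
Qed.

Lemma walk_simple_vpath T p q L : walk_len d T p q L -> exists l, vpath T p q l /\ NoDup l.
Proof.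
  induction 1.
  - exists [p]. split; [constructor|]. constructor; [intros []|constructor].
  - destruct IHwalk_len as [l [Hl Hn]].
    destruct (excluded_middle_informative (In p l)) as [Hin|Hin].
    + apply in_split in Hin. destruct Hin as [A [C E]]. subst l. exists (p :: C). split.
      * eapply vpath_suffix; eauto.
      * apply NoDup_app_remove_l in Hn. auto.
    + exists (p :: l). split; [econstructor; eauto|]. constructor; auto.
Qed.

Lemma vpath_mono T T' p q l : vpath T p q l ->
  (forall x y, In x l -> In y l -> adj X T x y -> adj X T' x y) -> vpath T' p q l.
Proof.
  induction 1; intros H'; [constructor|]. destruct (vpath_head _ _ _ _ H0) as [l' ->].
  econstructor.
  - apply H'; simpl; auto.
  - apply IHvpath. intros; apply H'; simpl; auto.
Qed.

Fixpoint path_cost (w : X -> X -> R) (l : list X) : R :=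
  match l with
  | x :: ((y :: _) as r) => w x y + path_cost w r
  | _ => 0
  end.

(* A simple path uses each tree edge at most once. *)
Lemma path_cost_le_tree_cost (w : X -> X -> R) :
  (forall x y, 0 <= w x y) -> (forall x y, w x y = w y x) ->
  forall l T p q, vpath T p q l -> NoDup l -> path_cost w l <= sumR (fun e => w (fst e) (snd e)) T.
Proof.
  intros Hw Hs. induction l as [|a l IHl]; intros T p q H Hn; [inversion H|].
  inversion H as [p0 E1 E2 E3|p0 u q0 l0 H3 H5 E1 E2 E3]; subst.
  - simpl. apply sumR_nonneg. intros; auto.
  - destruct (vpath_head _ _ _ _ H5) as [l' ->].
    change (path_cost w (a :: u :: l')) with (w a u + path_cost w (u :: l')).
    inversion Hn as [|? ? Hnotin Hn']; subst.
    assert (Hex : exists e, In e T /\ w a u = w (fst e) (snd e) /\ (fst e = a \/ snd e = a)).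
    { destruct H3 as [H3|H3]; [exists (a, u)|exists (u, a)]; simpl; auto. }
    destruct Hex as [e [HeT [Hwe Hep]]]. apply in_split in HeT. destruct HeT as [T1 [T2 ET]].
    assert (Hp' : vpath (T1 ++ T2) u q (u :: l')).
    { apply vpath_mono with T; auto. intros x y Hx Hy [Ha|Ha]; [left|right];
      (rewrite ET in Ha; apply in_app_or in Ha; apply in_or_app; destruct Ha as [Ha|[Ha|Ha]]; auto;
       exfalso; subst e; destruct Hep as [Hep|Hep]; simpl in Hep; subst; contradiction). }
    pose proof (IHl (T1 ++ T2) u q Hp' Hn').
    rewrite ET, sumR_app, sumR_cons. rewrite sumR_app in H0. lra.
Qed.

Lemma path_cost_ge_drop (w : X -> X -> R) (f : X -> R) :
  (forall x y, f x - f y <= w x y) -> forall T p q l, vpath T p q l -> f p - f q <= path_cost w l.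
Proof.
  intros Hw. induction 1; simpl; [lra|]. destruct (vpath_head _ _ _ _ H0) as [l' ->].
  specialize (Hw p u). lra.
Qed.

Lemma sumR_support_le (g : X -> R) : forall S Z, NoDup S ->
  (forall x, In x S -> ~ In x Z -> g x = 0) -> (forall x, In x Z -> 0 <= g x) ->
  sumR g S <= sumR g Z.
Proof.
  induction S; intros Z Hn Hz Hp; [rewrite sumR_nil; apply sumR_nonneg; auto|].
  inversion Hn; subst. rewrite sumR_cons. destruct (excluded_middle_informative (In a Z)) as [Ha|Ha].
  - apply in_split in Ha. destruct Ha as [Z1 [Z2 ->]]. rewrite sumR_app, sumR_cons.
    assert (sumR g S <= sumR g (Z1 ++ Z2)); [|rewrite sumR_app in H; lra].
    apply IHS; auto.
    + intros x Hx Hx'. apply Hz; [right; auto|]. intro H'. apply in_app_or in H'.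
      destruct H' as [H'|[H'|H']]; [apply Hx'; apply in_or_app; auto|subst; contradiction|].
      apply Hx'; apply in_or_app; auto.
    + intros x Hx. apply Hp. apply in_app_or in Hx. apply in_or_app. destruct Hx; simpl; auto.
  - rewrite (Hz a (or_introl eq_refl) Ha).
    assert (sumR g S <= sumR g Z) by (apply IHS; auto; intros; apply Hz; simpl; auto). lra.
Qed.

Variable t : R.
Hypothesis Ht : 0 < t.

(* A 1-Lipschitz bump of height [t/2] around [x]; along a tree path from [x] to another
   point of a [t]-separated set it must drop by [t/2]. *)
Definition bump (x p : X) : R := Rmax 0 (t / 2 - d x p).
Definition bump_var (x u v : X) : R := Rabs (bump x u - bump x v).

Lemma bump_far x p : t / 2 <= d x p -> bump x p = 0.
Proof. intro; unfold bump, Rmax; destruct Rle_dec; lra. Qed.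

Lemma bump_near x p : d x p < t / 2 -> bump x p = t / 2 - d x p.
Proof. intro; unfold bump, Rmax; destruct Rle_dec; lra. Qed.

Lemma bump_var_le x u v : bump_var x u v <= d u v.
Proof.
  unfold bump_var, bump. pose proof (d_tri X d Hm x u v). pose proof (d_tri X d Hm x v u).
  rewrite (d_sym X d Hm v u) in H0. unfold Rmax; repeat destruct Rle_dec; split_Rabs; lra.
Qed.

Variable S : list X.
Hypothesis HSn : NoDup S.
Hypothesis HSs : separated X d t S.

Lemma bump_centre_unique w x y : In x S -> In y S -> d x w < t / 2 -> d y w < t / 2 -> x = y.
Proof.
  intros Hx Hy H1 H2. destruct (excluded_middle_informative (x = y)) as [|Hne]; auto. exfalso.
  pose proof (HSs x y Hx Hy Hne). pose proof (d_tri X d Hm x w y). rewrite (d_sym X d Hm w y) in H0. lra.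
Qed.

Lemma bump_var_sum_within u v Z :
  (forall x, In x S -> d x u < t / 2 \/ d x v < t / 2 -> In x Z) ->
  sumR (fun x => bump_var x u v) S <= sumR (fun x => bump_var x u v) Z.
Proof.
  intros HZ. apply sumR_support_le; auto; [|intros; apply Rabs_pos].
  intros x Hx HxZ. unfold bump_var. rewrite !bump_far; [rewrite Rminus_0_r, Rabs_R0; auto| |].
  - destruct (Rlt_or_le (d x v) (t / 2)); auto. exfalso; apply HxZ; auto.
  - destruct (Rlt_or_le (d x u) (t / 2)); auto. exfalso; apply HxZ; auto.
Qed.

Lemma bump_var_two_centres u v x0 x1 : In x0 S -> In x1 S -> x0 <> x1 ->
  d x0 u < t / 2 -> d x1 v < t / 2 -> bump_var x0 u v + bump_var x1 u v <= d u v.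
Proof.
  intros Hx0 Hx1 Hne Hd0 Hd1. unfold bump_var.
  pose proof (HSs x0 x1 Hx0 Hx1 Hne).
  pose proof (d_tri X d Hm x0 u x1). pose proof (d_tri X d Hm u v x1).
  pose proof (d_tri X d Hm x0 v x1). pose proof (d_tri X d Hm x1 u x0).
  pose proof (d_sym X d Hm v x1). pose proof (d_sym X d Hm x1 x0).
  pose proof (d_sym X d Hm u x0). pose proof (d_nonneg X d Hm u v).
  rewrite (bump_near x0 u), (bump_far x0 v), (bump_far x1 u), (bump_near x1 v) by lra.
  split_Rabs; lra.
Qed.

(* At most two bumps are nonzero at [u] or [v], and they are disjoint. *)
Lemma bump_var_sum_le u v : sumR (fun x => bump_var x u v) S <= d u v.
Proof.
  pose proof (d_nonneg X d Hm u v) as Huv.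
  assert (Hone : forall Z, (forall x, In x S -> d x u < t / 2 \/ d x v < t / 2 -> In x Z) ->
            (length Z <= 1)%nat -> sumR (fun x => bump_var x u v) S <= d u v).
  { intros Z HZ HZ1. eapply Rle_trans; [apply (bump_var_sum_within u v Z HZ)|].
    destruct Z as [|x [|y Z]]; simpl in HZ1; try lia; rewrite ?sumR_cons, sumR_nil; [lra|].
    pose proof (bump_var_le x u v). lra. }
  destruct (excluded_middle_informative (exists x0, In x0 S /\ d x0 u < t / 2)) as [[x0 [Hx0 Hd0]]|N0];
  destruct (excluded_middle_informative (exists x1, In x1 S /\ d x1 v < t / 2)) as [[x1 [Hx1 Hd1]]|N1].
  - destruct (excluded_middle_informative (x0 = x1)) as [<-|Hne].
    + apply (Hone [x0]); [|simpl; lia]. intros x Hx [Hd|Hd]; left.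
      * apply (bump_centre_unique u); auto.
      * apply (bump_centre_unique v); auto.
    + eapply Rle_trans; [apply (bump_var_sum_within u v [x0; x1])|].
      * intros x Hx [Hd|Hd]; [left|right; left]; [apply (bump_centre_unique u)|apply (bump_centre_unique v)]; auto.
      * rewrite !sumR_cons, sumR_nil, Rplus_0_r. apply bump_var_two_centres; auto.
  - apply (Hone [x0]); [|simpl; lia]. intros x Hx [Hd|Hd]; [left; apply (bump_centre_unique u); auto|].
    exfalso. apply N1; eauto.
  - apply (Hone [x1]); [|simpl; lia]. intros x Hx [Hd|Hd]; [exfalso; apply N0; eauto|].
    left. apply (bump_centre_unique v); auto.
  - apply (Hone []); [|simpl; lia]. intros x Hx [Hd|Hd]; [apply N0|apply N1]; eauto.
Qed.

Lemma bump_var_tree_sum_ge T x y :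
  In x S -> In y S -> x <> y -> (exists L, walk_len d T x y L) ->
  t / 2 <= sumR (fun e => bump_var x (fst e) (snd e)) T.
Proof.
  intros Hx Hy Hyx [L HL]. destruct (walk_simple_vpath T x y L HL) as [l [Hl Hn]].
  assert (HH : bump x x - bump x y <= path_cost (bump_var x) l).
  { apply (path_cost_ge_drop (bump_var x) (bump x)) with T; auto.
    intros; unfold bump_var; split_Rabs; lra. }
  assert (t <= d x y) by (apply HSs; auto).
  rewrite (bump_near x x), (bump_far x y), (d_refl X d Hm) in HH by (rewrite ?(d_refl X d Hm); lra).
  assert (path_cost (bump_var x) l <= sumR (fun e => bump_var x (fst e) (snd e)) T); [|lra].
  apply path_cost_le_tree_cost with x y; auto.
  - intros; apply Rabs_pos.
  - intros; unfold bump_var; apply Rabs_minus_sym.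
Qed.

Lemma separated_tree_weight_ge T : (2 <= length S)%nat ->
  (forall p q, In p S -> In q S -> exists L, walk_len d T p q L) ->
  INR (length S) * (t / 2) <= sumR (fun e => d (fst e) (snd e)) T.
Proof.
  intros H2 HT.
  assert (Hx : forall x, In x S -> t / 2 <= sumR (fun e => bump_var x (fst e) (snd e)) T).
  { intros x Hx. assert (exists y, In y S /\ y <> x) as [y [Hy Hyx]].
    { destruct (excluded_middle_informative (exists y, In y S /\ y <> x)) as [H|H]; auto. exfalso.
      assert (incl S [x]).
      { intros y Hy. left. destruct (excluded_middle_informative (x = y)); auto. exfalso; apply H; eauto. }
      pose proof (NoDup_incl_length HSn H0). simpl in H1. lia. }
    apply (bump_var_tree_sum_ge T x y); auto. }
  rewrite Rmult_comm, <- sumR_const.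
  eapply Rle_trans; [apply sumR_le; exact Hx|].
  rewrite sumR_exchange. apply sumR_le. intros e _. apply bump_var_sum_le.
Qed.
End TreeWeight.

Lemma INR_le_pow2 (n : nat) : INR n <= 2 ^ n.
Proof.
  induction n; [simpl; lra|]. rewrite S_INR. simpl pow.
  assert (1 <= 2 ^ n) by (apply pow_R1_Rle; lra). lra.
Qed.

Lemma exists_pow2_bracket (x : R) : 1 <= x -> exists j : nat, 2 ^ j <= x < 2 ^ (S j).
Proof.
  intro Hx. assert (Hn : exists n : nat, x < 2 ^ n).
  { destruct (INR_unbounded x) as [n Hn]. exists n. pose proof (INR_le_pow2 n). lra. }
  destruct Hn as [n Hn]. induction n; [simpl in Hn; lra|].
  destruct (Rlt_or_le x (2 ^ n)) as [H|H]; auto. exists n. split; auto.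
Qed.

Lemma pow2_lt_inv (i j : nat) : 2 ^ i < 2 ^ j -> (i < j)%nat.
Proof.
  intro H. destruct (Compare_dec.le_lt_dec j i) as [H'|H']; auto.
  assert (2 ^ j <= 2 ^ i) by (apply Rle_pow; auto; lra). lra.
Qed.

Lemma sumR_seq_const (c : R) a n : sumR (fun _ => c) (seq a n) = INR n * c.
Proof. rewrite sumR_const, length_seq. ring. Qed.

Definition other_end {X : Type} (v : X) (e : X * X) : X := if dec (fst e = v) then snd e else fst e.

Section Counting.
Variable X : Type.
Variable d : X -> X -> R.
Hypothesis Hm : is_metric X d.
Variable g : R.
Hypothesis Hdb : is_doubling X d g.
Variable s : R.
Hypothesis Hs : 1 < s.
Variable P : list X.
Hypothesis HPn : NoDup P.
Variable G : list (X * X).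
Hypothesis HSep : unblocked_sequence X d s G.
Hypothesis HGP : forall e, In e G -> In (fst e) P /\ In (snd e) P /\ fst e <> snd e.
Variables dmin dmax : R.
Hypothesis Hdmin0 : 0 < dmin.
Hypothesis Hdmin : forall e, In e G -> dmin <= len X d e.
Hypothesis Hdmax : forall e, In e G -> len X d e <= dmax.
Variable J : nat.
Hypothesis HJ : dmax / dmin < 2 ^ (S J).

Let k := 2 * s + 2.
Let K := doubling_const g.

Lemma k_ge4 : 4 <= k. Proof. unfold k. lra. Qed.

Lemma G_NoDup : NoDup G. Proof. apply (unblocked_NoDup X d Hm s Hs G HSep). Qed.

Lemma conflict e f r : In e G -> In f G -> e <> f ->
  r <= len X d e / k -> r <= len X d f / k -> ~ edges_close X d r e f.
Proof. intros. apply (unblocked_not_close X d Hm s G e f r); auto. Qed.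

(** * Length bands *)

Definition band_base (j : nat) : R := dmin * 2 ^ j.
Definition in_band (j : nat) (e : X * X) : Prop := band_base j <= len X d e < band_base (S j).
Definition band_index (e : X * X) : nat := epsilon (inhabits 0%nat) (fun j => in_band j e).
Definition band (j : nat) : list (X * X) := filter (fun e => dec (band_index e = j)) G.

Lemma band_base_pos j : 0 < band_base j.
Proof. unfold band_base. apply Rmult_lt_0_compat; auto. apply pow_lt; lra. Qed.

Lemma band_base_S j : band_base (S j) = 2 * band_base j.
Proof. unfold band_base. simpl. ring. Qed.

Lemma band_index_spec e : In e G -> in_band (band_index e) e /\ (band_index e <= J)%nat.
Proof.
  intro He. pose proof (Hdmin e He). pose proof (Hdmax e He).
  assert (Hex : exists j, in_band j e).
  { destruct (exists_pow2_bracket (len X d e / dmin)) as [j [H1 H2]].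
    - apply Rmult_le_reg_r with dmin; auto. unfold Rdiv. rewrite Rmult_assoc, Rinv_l; lra.
    - exists j. unfold in_band, band_base. split.
      + apply Rmult_le_reg_r with (/ dmin); [apply Rinv_0_lt_compat; auto|].
        replace (dmin * 2 ^ j * / dmin) with (2 ^ j) by (field; lra). auto.
      + apply Rmult_lt_reg_r with (/ dmin); [apply Rinv_0_lt_compat; auto|].
        replace (dmin * 2 ^ S j * / dmin) with (2 ^ S j) by (field; lra). auto. }
  pose proof (@epsilon_spec nat (inhabits 0%nat) _ Hex) as Hb. fold (band_index e) in Hb.
  split; auto. destruct Hb as [Hb1 _]. unfold band_base in Hb1.
  enough (2 ^ band_index e < 2 ^ S J) by (apply pow2_lt_inv in H1; lia).
  apply Rle_lt_trans with (dmax / dmin); auto. apply Rmult_le_reg_r with dmin; auto.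
  unfold Rdiv. rewrite Rmult_assoc, Rinv_l; lra.
Qed.

Lemma band_In j e : In e (band j) -> In e G /\ in_band j e.
Proof.
  intro He. apply filter_In in He. destruct He as [He Hb]. apply (proj1 (decP _)) in Hb.
  split; auto. subst. apply band_index_spec; auto.
Qed.

Lemma sum_over_bands (f : X * X -> R) (l : list (X * X)) : incl l G ->
  sumR f l = sumR (fun j => sumR f (filter (fun e => dec (band_index e = j)) l)) (seq 0 (S J)).
Proof.
  intro Hl. apply sum_partition; [apply seq_NoDup|]. intros e He. apply in_seq.
  destruct (band_index_spec e (Hl e He)). lia.
Qed.

Lemma count_over_bands (l : list (X * X)) : incl l G ->
  INR (length l) = sumR (fun j => INR (length (filter (fun e => dec (band_index e = j)) l))) (seq 0 (S J)).
Proof.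
  intro Hl. rewrite INR_length_sumR, (sum_over_bands _ l Hl).
  apply sumR_ext. intros. now rewrite INR_length_sumR.
Qed.

(** * Maximum degree *)

Lemma other_end_spec v e : fst e = v \/ snd e = v ->
  d v (other_end v e) = len X d e /\
  ((fst e = v /\ snd e = other_end v e) \/ (snd e = v /\ fst e = other_end v e)).
Proof.
  intro Hv. unfold other_end, len. destruct (dec (fst e = v)) eqn:E.
  - apply (proj1 (decP _)) in E. rewrite E. auto.
  - apply (proj1 (decF _)) in E. destruct Hv as [Hv|Hv]; [contradiction|].
    rewrite Hv, (d_sym X d Hm). auto.
Qed.

Lemma incident_edges_close v e f r : fst e = v \/ snd e = v -> fst f = v \/ snd f = v ->
  d (other_end v e) (other_end v f) <= r -> edges_close X d r e f.
Proof.
  intros He Hf Hd. pose proof (d_nonneg X d Hm (other_end v e) (other_end v f)).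
  destruct (other_end_spec v e He) as [_ [[E1 E2]|[E1 E2]]];
  destruct (other_end_spec v f Hf) as [_ [[F1 F2]|[F1 F2]]];
  unfold edges_close; rewrite ?E1, ?E2, ?F1, ?F2, ?(d_refl X d Hm); lra.
Qed.

(* The far ends of the band-[j] edges at [v] lie within [2 band_base j] of [v] and are
   [band_base j / k]-separated, since otherwise the two edges would be close. *)
Lemma incident_band_count v j (M : nat) : 4 * k <= 2 ^ M ->
  INR (length (filter (fun e => dec (band_index e = j)) (filter (fun e => dec (fst e = v \/ snd e = v)) G)))
  <= K ^ M.
Proof.
  intro HM. set (L := filter _ (filter _ G)).
  assert (HL : forall e, In e L -> In e G /\ (fst e = v \/ snd e = v) /\
                 band_base j <= len X d e < 2 * band_base j).
  { intros e He. apply filter_In in He. destruct He as [He Hb]. apply filter_In in He.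
    destruct He as [He Hv]. apply (proj1 (decP _)) in Hv. rewrite <- band_base_S.
    repeat split; auto; apply (band_In j); apply filter_In; auto. }
  pose proof (band_base_pos j). pose proof k_ge4.
  assert (Hr : forall e, In e L -> band_base j / k <= len X d e / k).
  { intros e He. destruct (HL e He) as [_ [_ [H1 _]]].
    unfold Rdiv. apply Rmult_le_compat_r; [left; apply Rinv_0_lt_compat|]; lra. }
  assert (HNL : NoDup L) by (apply NoDup_filter, NoDup_filter, G_NoDup).
  rewrite <- (length_map (other_end v) L).
  apply (doubling_packing X d Hm g Hdb M v (2 * band_base j) (band_base j / k)); try lra.
  - apply Rdiv_lt_0_compat; lra.
  - clear HM Hr. induction HNL as [|x L' Hx HNL' IH]; simpl; constructor.
    + intro Hin. apply in_map_iff in Hin. destruct Hin as [y [Ey Hy]].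
      assert (x <> y) by (intro; subst; contradiction).
      destruct (HL x (or_introl eq_refl)) as [HxG [Hxv _]].
      destruct (HL y (or_intror Hy)) as [HyG [Hyv _]].
      apply (conflict x y 0); auto.
      * unfold Rdiv. apply Rmult_le_pos; [apply (d_nonneg X d Hm)|left; apply Rinv_0_lt_compat; lra].
      * unfold Rdiv. apply Rmult_le_pos; [apply (d_nonneg X d Hm)|left; apply Rinv_0_lt_compat; lra].
      * apply (incident_edges_close v); auto. rewrite Ey, (d_refl X d Hm). lra.
    + apply IH. intros; apply HL; simpl; auto.
  - intros y Hy. apply in_map_iff in Hy. destruct Hy as [e [<- He]].
    destruct (HL e He) as [_ [Hv Hlen]]. rewrite (proj1 (other_end_spec v e Hv)). lra.
  - intros y z Hy Hz Hyz. apply in_map_iff in Hy. apply in_map_iff in Hz.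
    destruct Hy as [e [<- He]]. destruct Hz as [f [<- Hf]].
    destruct (Rlt_or_le (band_base j / k) (d (other_end v e) (other_end v f))) as [Hlt|Hle]; auto.
    exfalso. assert (e <> f) by (intro; subst; contradiction).
    destruct (HL e He) as [HeG [Hev _]]. destruct (HL f Hf) as [HfG [Hfv _]].
    apply (conflict e f (band_base j / k)); auto. apply (incident_edges_close v); auto.
  - assert (band_base j / k * k = band_base j) by (field; lra).
    assert (0 < band_base j / k) by (apply Rdiv_lt_0_compat; lra). nra.
Qed.

Lemma degree_le v (M : nat) : 4 * k <= 2 ^ M ->
  INR (length (filter (fun e => dec (fst e = v \/ snd e = v)) G)) <= INR (S J) * K ^ M.
Proof.
  intro HM. rewrite (count_over_bands _ (fun e He => proj1 (proj1 (filter_In _ _ _) He))).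
  eapply Rle_trans; [apply (sumR_le _ (fun _ => K ^ M)); intros j _; apply incident_band_count; auto|].
  rewrite sumR_seq_const. lra.
Qed.

(** * Nets matching the bands *)

Definition net_base : R := dmin / (4 * k).
Definition level_net (j : nat) : list X := net X d net_base P j.
Definition level_radius (j : nat) : R := net_radius net_base j.

Lemma net_base_pos : 0 < net_base.
Proof. unfold net_base. pose proof k_ge4. apply Rdiv_lt_0_compat; lra. Qed.

Lemma level_radius_pos j : 0 < level_radius j.
Proof. apply net_radius_pos, net_base_pos. Qed.

Lemma band_base_level_radius j : band_base j = 4 * k * level_radius j.
Proof. unfold band_base, level_radius, net_radius, net_base. pose proof k_ge4. field. lra. Qed.

Lemma level_net_separated j : separated X d (level_radius j) (level_net j) /\ NoDup (level_net j).
Proof. apply net_separated; auto. apply net_base_pos. Qed.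

Definition net_rep (j : nat) (a : X) : X :=
  epsilon (inhabits a) (fun u => In u (level_net j) /\ d a u < 2 * level_radius j).

Lemma net_rep_spec j a : In a P -> In (net_rep j a) (level_net j) /\ d a (net_rep j a) < 2 * level_radius j.
Proof.
  intro Ha. unfold net_rep. apply epsilon_spec.
  destruct (net_covers X d Hm net_base net_base_pos P j a Ha) as [u Hu]. exists u. auto.
Qed.

Definition rep_ratio : R := 8 * k + 4.

Lemma band_reps_spec j e : In e (band j) ->
  net_rep j (fst e) <> net_rep j (snd e) /\
  d (net_rep j (fst e)) (net_rep j (snd e)) <= rep_ratio * level_radius j /\
  In (net_rep j (fst e)) (level_net j) /\ In (net_rep j (snd e)) (level_net j).
Proof.
  intro He. destruct (band_In j e He) as [HeG [Hb1 Hb2]]. destruct (HGP e HeG) as [H1 [H2 _]].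
  destruct (net_rep_spec j _ H1) as [R1 D1]. destruct (net_rep_spec j _ H2) as [R2 D2].
  rewrite band_base_S, band_base_level_radius in *. unfold len in *.
  pose proof k_ge4. pose proof (level_radius_pos j).
  set (u := net_rep j (fst e)) in *. set (v := net_rep j (snd e)) in *.
  pose proof (d_tri X d Hm (fst e) u (snd e)). pose proof (d_tri X d Hm u (snd e) v).
  pose proof (d_tri X d Hm u (fst e) (snd e)). rewrite (d_sym X d Hm u (fst e)) in *.
  split; [|split; [|split; auto]].
  - intro Huv. rewrite <- Huv in D2. rewrite (d_sym X d Hm (snd e) u) in *. nra.
  - unfold rep_ratio. nra.
Qed.

(* Two band-[j] edges with the same representatives are close, hence equal. *)
Lemma band_reps_inj j e f : In e (band j) -> In f (band j) ->
  net_rep j (fst e) = net_rep j (fst f) -> net_rep j (snd e) = net_rep j (snd f) -> e = f.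
Proof.
  intros He Hf E1 E2. destruct (excluded_middle_informative (e = f)) as [|Hne]; auto. exfalso.
  destruct (band_In j e He) as [HeG [He1 _]]. destruct (band_In j f Hf) as [HfG [Hf1 _]].
  destruct (HGP e HeG) as [A1 [A2 _]]. destruct (HGP f HfG) as [B1 [B2 _]].
  destruct (net_rep_spec j _ A1) as [_ DA1]. destruct (net_rep_spec j _ A2) as [_ DA2].
  destruct (net_rep_spec j _ B1) as [_ DB1]. destruct (net_rep_spec j _ B2) as [_ DB2].
  rewrite E1 in DA1. rewrite E2 in DA2.
  pose proof k_ge4. pose proof (level_radius_pos j). rewrite band_base_level_radius in He1, Hf1.
  apply (conflict e f (4 * level_radius j)); auto.
  - assert (len X d e / k * k = len X d e) by (field; lra). nra.
  - assert (len X d f / k * k = len X d f) by (field; lra). nra.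
  - left. pose proof (d_tri X d Hm (fst e) (net_rep j (fst f)) (fst f)).
    pose proof (d_tri X d Hm (snd e) (net_rep j (snd f)) (snd f)).
    rewrite (d_sym X d Hm (net_rep j (fst f)) (fst f)), (d_sym X d Hm (net_rep j (snd f)) (snd f)) in *.
    split; lra.
Qed.

Definition net_near (j : nat) (z : X) : list X :=
  filter (fun w => dec (d z w <= rep_ratio * level_radius j)) (level_net j).

Lemma net_near_count j z (M1 : nat) : 4 * rep_ratio <= 2 ^ M1 -> INR (length (net_near j z)) <= K ^ M1.
Proof.
  intros HM. destruct (level_net_separated j) as [Hsep Hnd].
  pose proof (level_radius_pos j). pose proof k_ge4.
  apply (doubling_packing X d Hm g Hdb M1 z (rep_ratio * level_radius j) (level_radius j / 2));
    unfold rep_ratio in *.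
  - nra.
  - lra.
  - apply NoDup_filter; auto.
  - intros y Hy. apply filter_In in Hy. apply (proj1 (decP _)). tauto.
  - intros y w Hy Hw Hyw. apply filter_In in Hy. apply filter_In in Hw.
    pose proof (Hsep y w (proj1 Hy) (proj1 Hw) Hyw). lra.
  - nra.
Qed.

Lemma band_count_le_net j (M1 : nat) : 4 * rep_ratio <= 2 ^ M1 ->
  INR (length (band j)) <= INR (length (level_net j)) * K ^ M1.
Proof.
  intro HM. destruct (level_net_separated j) as [_ Hnd].
  rewrite (count_partition (fun e => net_rep j (fst e)) (band j) (level_net j) Hnd)
    by (intros e He; apply (band_reps_spec j e He)).
  rewrite Rmult_comm, <- sumR_const. apply sumR_le. intros z Hz.
  eapply Rle_trans; [|apply (net_near_count j z M1 HM)]. apply le_INR.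
  apply (injective_length_le (fun e => net_rep j (snd e))).
  - apply NoDup_filter, NoDup_filter, G_NoDup.
  - intros e He. apply filter_In in He. destruct He as [He Hr]. apply (proj1 (decP _)) in Hr.
    destruct (band_reps_spec j e He) as [_ [Hd [_ H2]]].
    apply filter_In. split; auto. apply (proj2 (decP _)). rewrite <- Hr. auto.
  - intros e f He Hf E. apply filter_In in He. apply filter_In in Hf.
    destruct He as [He Hre]. destruct Hf as [Hf Hrf].
    apply (proj1 (decP _)) in Hre. apply (proj1 (decP _)) in Hrf.
    apply (band_reps_inj j); auto. congruence.
Qed.

(** * Number of edges *)

(* A band-[j] edge is charged to an endpoint representative that does not survive to level
   [j + m]; both cannot survive, being distinct and closer than [level_radius (j + m)]. *)
Definition charged_point (j m : nat) (e : X * X) : X :=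
  if dec (In (net_rep j (fst e)) (level_net (j + m))) then net_rep j (snd e) else net_rep j (fst e).

Lemma charged_point_spec j m e : rep_ratio < 2 ^ m -> In e (band j) ->
  let z := charged_point j m e in
  In z P /\ In z (level_net j) /\ ~ In z (level_net (j + m)) /\
  ((z = net_rep j (snd e) /\ In (net_rep j (fst e)) (net_near j z)) \/
   (z = net_rep j (fst e) /\ In (net_rep j (snd e)) (net_near j z))).
Proof.
  intros Hm' He z. destruct (band_reps_spec j e He) as [Hne [Hd [H1 H2]]].
  unfold z, charged_point. destruct (dec (In (net_rep j (fst e)) (level_net (j + m)))) eqn:E.
  - apply (proj1 (decP _)) in E. repeat split; auto.
    + apply (net_incl_P X d net_base P j); auto.
    + intro Hv. destruct (level_net_separated (j + m)) as [Hsep _].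
      pose proof (Hsep _ _ E Hv Hne). unfold level_radius in H.
      rewrite net_radius_add in H. fold (level_radius j) in H. pose proof (level_radius_pos j). nra.
    + left. split; auto. apply filter_In. split; auto. apply (proj2 (decP _)). rewrite (d_sym X d Hm). auto.
  - apply (proj1 (decF _)) in E. repeat split; auto.
    + apply (net_incl_P X d net_base P j); auto.
    + right. split; auto. apply filter_In. split; auto. apply (proj2 (decP _)). auto.
Qed.

Lemma charged_to_count j m (M1 : nat) z : rep_ratio < 2 ^ m -> 4 * rep_ratio <= 2 ^ M1 -> In z P ->
  INR (length (filter (fun e => dec (charged_point j m e = z)) (band j)))
  <= 2 * K ^ M1 * indic (In z (level_net j) /\ ~ In z (level_net (j + m))).
Proof.
  intros Hm' HM Hz. set (L := filter _ (band j)).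
  assert (HLspec : forall e, In e L -> In e (band j) /\ charged_point j m e = z).
  { intros e He. apply filter_In in He. destruct He as [He Hc]. apply (proj1 (decP _)) in Hc. auto. }
  destruct (list_nil_or_In L) as [->|[e0 He0]].
  { simpl. pose proof (indic_ge0 (In z (level_net j) /\ ~ In z (level_net (j + m)))).
    pose proof (doubling_const_pow_ge0 g M1). fold K in H0. nra. }
  destruct (HLspec e0 He0) as [HeB0 Hc0].
  destruct (charged_point_spec j m e0 Hm' HeB0) as [_ [Hz1 [Hz2 _]]]. rewrite Hc0 in Hz1, Hz2.
  unfold indic. rewrite (proj2 (decP _) (conj Hz1 Hz2)), Rmult_1_r.
  apply Rle_trans with
    (INR (length (map (fun w => (z, w)) (net_near j z) ++ map (fun w => (w, z)) (net_near j z)))).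
  - apply le_INR. apply (injective_length_le (fun e => (net_rep j (fst e), net_rep j (snd e)))).
    + apply NoDup_filter, NoDup_filter, G_NoDup.
    + intros e He. destruct (HLspec e He) as [HeB Hc].
      destruct (charged_point_spec j m e Hm' HeB) as [_ [_ [_ [[E1 E2]|[E1 E2]]]]];
      rewrite Hc in E1, E2; apply in_or_app.
      * right. apply in_map_iff. exists (net_rep j (fst e)). split; [rewrite E1|]; auto.
      * left. apply in_map_iff. exists (net_rep j (snd e)). split; [rewrite E1|]; auto.
    + intros e f He Hf E. injection E; intros.
      apply (band_reps_inj j); auto; [apply HLspec; auto|apply HLspec; auto].
  - rewrite length_app, !length_map, plus_INR. pose proof (net_near_count j z M1 HM). lra.
Qed.

(* A point leaves the nested nets at most once, so it is charged in at most [2 m] bands. *)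
Lemma edge_count_le (m M1 : nat) : rep_ratio < 2 ^ m -> 4 * rep_ratio <= 2 ^ M1 ->
  INR (length G) <= INR (length P) * (2 * K ^ M1 * INR (2 * m)).
Proof.
  intros Hm' HM. rewrite (count_over_bands G (incl_refl G)).
  eapply Rle_trans.
  { apply (sumR_le _ (fun j => sumR (fun z =>
      2 * K ^ M1 * indic (In z (level_net j) /\ ~ In z (level_net (j + m)))) P)).
    intros j _. change (filter _ G) with (band j).
    rewrite (count_partition (charged_point j m) (band j) P HPn)
      by (intros e He; apply (charged_point_spec j m e Hm' He)).
    apply sumR_le. intros z Hz. apply (charged_to_count j m M1 z Hm' HM Hz). }
  rewrite sumR_exchange, (Rmult_comm (INR (length P))), <- sumR_const. apply sumR_le. intros z _.
  rewrite sumR_scale. apply Rmult_le_compat_l; [pose proof (doubling_const_pow_ge0 g M1); fold K in H; lra|].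
  apply (sparse_indices_count (fun j => In z (level_net j) /\ ~ In z (level_net (j + m)))).
  intros i j [Hi1 Hi2] [Hj1 Hj2] Hij. apply Hi2. apply (net_nested X d net_base P (i + m) j Hij); auto.
Qed.

(** * Total weight *)

Variable T : list (X * X).
Variable W : R.
Hypothesis HW : W = sumR (fun e => d (fst e) (snd e)) T.
Hypothesis HTc : forall p q, In p P -> In q P -> exists L, walk_len d T p q L.
Hypothesis HW0 : 0 <= W.

(* Each band-[j] edge has length about [level_radius j], and a spanning tree of [P] connects
   the [level_radius j]-separated net, so it weighs at least that net's size times it. *)
Lemma band_weight_le j (M1 : nat) : 4 * rep_ratio <= 2 ^ M1 ->
  sumR (len X d) (band j) <= 16 * k * K ^ M1 * W.
Proof.
  intro HM. pose proof (doubling_const_pow_ge0 g M1) as HKM. fold K in HKM. pose proof k_ge4.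
  pose proof (level_radius_pos j). destruct (level_net_separated j) as [Hsep Hnd].
  destruct (Compare_dec.le_lt_dec 2 (length (level_net j))) as [H2|H2].
  - assert (HL : INR (length (level_net j)) * (level_radius j / 2) <= W).
    { rewrite HW. apply (separated_tree_weight_ge X d Hm (level_radius j)); auto.
      intros p q Hp Hq. apply HTc; apply (net_incl_P X d net_base P j); auto. }
    assert (Hb : sumR (len X d) (band j) <= INR (length (band j)) * (8 * k * level_radius j)).
    { rewrite Rmult_comm, <- sumR_const. apply sumR_le. intros e He.
      destruct (band_In j e He) as [_ [_ Hl]]. rewrite band_base_S, band_base_level_radius in Hl. lra. }
    pose proof (band_count_le_net j M1 HM).
    assert (INR (length (band j)) * (8 * k * level_radius j)
            <= (8 * k * K ^ M1) * (INR (length (level_net j)) * level_radius j)).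
    { replace ((8 * k * K ^ M1) * (INR (length (level_net j)) * level_radius j))
        with ((INR (length (level_net j)) * K ^ M1) * (8 * k * level_radius j)) by ring.
      apply Rmult_le_compat_r; [nra|auto]. }
    assert ((8 * k * K ^ M1) * (INR (length (level_net j)) * level_radius j) <= (8 * k * K ^ M1) * (2 * W)).
    { apply Rmult_le_compat_l; [apply Rmult_le_pos; lra|lra]. }
    lra.
  - destruct (band j) as [|e L] eqn:EB.
    + rewrite sumR_nil. apply Rmult_le_pos; [|auto]. nra.
    + exfalso. destruct (band_reps_spec j e) as [Hne [_ [H1 H2']]]; [rewrite EB; left; auto|].
      apply Hne. apply (length_le1_eq (level_net j)); auto. lia.
Qed.

Lemma weight_le (M1 : nat) : 4 * rep_ratio <= 2 ^ M1 ->
  sumR (len X d) G <= INR (S J) * (16 * k * K ^ M1 * W).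
Proof.
  intro HM. rewrite (sum_over_bands (len X d) G (incl_refl G)).
  eapply Rle_trans; [apply (sumR_le _ (fun _ => 16 * k * K ^ M1 * W)); intros j _; apply band_weight_le; auto|].
  rewrite sumR_seq_const. lra.
Qed.

End Counting.

(** * Explicit constants *)

Lemma exists_pow2_between (x : R) : 1 <= x -> exists M : nat, x <= 2 ^ M <= 2 * x.
Proof.
  intro Hx. destruct (exists_pow2_bracket x Hx) as [j [H1 H2]].
  exists (S j). simpl in *. lra.
Qed.

Lemma Rpower_2s_le s a b : 1 < s -> a <= b -> Rpower (2 * s) a <= Rpower (2 * s) b.
Proof. intros. apply Rle_Rpower; lra. Qed.

Lemma Rpower_2s_pos s a : 0 < Rpower (2 * s) a.
Proof. apply exp_pos. Qed.

Lemma Rpower_2s_nat s (a : nat) : 1 < s -> Rpower (2 * s) (INR a) = (2 * s) ^ a.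
Proof. intro. apply Rpower_pow. lra. Qed.

Lemma pow_2s_ge s (a : nat) : 1 < s -> (1 <= a)%nat -> 2 ^ a * s <= (2 * s) ^ a.
Proof.
  intros Hs Ha. rewrite Rpow_mult_distr. apply Rmult_le_compat_l; [apply pow_le; lra|].
  replace s with (s ^ 1) at 1 by ring. apply Rle_pow; lra || lia.
Qed.

Lemma doubling_const_pow_le g s (M : nat) (a : R) : 1 < s -> 0 <= g ->
  2 ^ M <= Rpower (2 * s) a -> doubling_const g ^ M <= Rpower (2 * s) (a * g).
Proof.
  intros Hs Hg HM. unfold doubling_const.
  rewrite <- Rpower_pow by apply exp_pos. rewrite Rpower_mult, Rmult_comm, <- Rpower_mult.
  rewrite Rpower_pow by lra. rewrite <- Rpower_mult. apply Rle_Rpower_l; auto.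
  split; auto. apply pow_lt. lra.
Qed.

Lemma pow_le_Rpower_2s s (a : nat) g : 1 < s -> 1 <= g -> (2 * s) ^ a <= Rpower (2 * s) (INR a * g).
Proof.
  intros Hs Hg. rewrite <- Rpower_2s_nat by auto. apply Rpower_2s_le; auto.
  pose proof (pos_INR a). nra.
Qed.

Lemma lg_ge_exponent x (J : nat) : 2 ^ J <= x -> INR J <= lg x.
Proof.
  intro HJ. unfold lg. assert (Hl2 : 0 < ln 2) by (rewrite <- ln_1; apply ln_increasing; lra).
  apply Rmult_le_reg_r with (ln 2); auto. unfold Rdiv. rewrite Rmult_assoc, Rinv_l, Rmult_1_r by lra.
  rewrite <- ln_pow by lra. destruct HJ as [HJ|<-]; [|lra].
  left. apply ln_increasing; auto. apply pow_lt; lra.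
Qed.

Section GreedyBounds.
Variable X : Type.
Variable d : X -> X -> R.
Hypothesis Hm : is_metric X d.
Variable gamma : R.
Hypothesis Hdb : is_doubling X d gamma.
Variable P : list X.
Hypothesis HPn : NoDup P.
Variable s : R.
Hypothesis Hs : 1 < s.
Variables ord G : list (X * X).
Hypothesis Hord : valid_order X P ord.
Hypothesis Hrun : run X d s [] ord G.
Variables dmin dmax alpha : R.
Variables p0 q0 : X.
Hypothesis Hp0 : In p0 P.
Hypothesis Hq0 : In q0 P.
Hypothesis Hpq0 : p0 <> q0.
Hypothesis Hdmin0 : 0 < dmin.
Hypothesis Hdmin : forall p q, In p P -> In q P -> p <> q -> dmin <= d p q.
Hypothesis Hdmax : forall p q, In p P -> In q P -> p <> q -> d p q <= dmax.
Hypothesis Halpha : alpha = dmax / dmin.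

Lemma gamma_ge1 : 1 <= gamma.
Proof. apply (doubling_dim_ge1 X d Hm gamma Hdb p0 q0 Hpq0). Qed.

Lemma greedy_unblocked : unblocked_sequence X d s G.
Proof. apply (run_from_empty X d s ord G Hrun). Qed.

Lemma greedy_edges_in_P e : In e G -> In (fst e) P /\ In (snd e) P /\ fst e <> snd e.
Proof.
  intro He. destruct (run_from_empty X d s ord G Hrun) as [_ [_ HG]].
  destruct e as [a b]. apply (proj2 Hord). apply HG; auto.
Qed.

Lemma greedy_spanner p q : In p P -> In q P ->
  exists L, walk_len d G p q L /\ L <= (s + 1) / (s - 1) * d p q.
Proof.
  destruct (run_from_empty X d s ord G Hrun) as [_ [Hcov HG]].
  apply (greedy_stretch X d Hm s Hs P ord G); auto.
  - intros. apply (proj2 Hord). auto.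
  - intros [a b] He. apply (proj2 Hord). auto.
Qed.

Lemma greedy_len_min e : In e G -> dmin <= len X d e.
Proof. intro He. destruct (greedy_edges_in_P e He) as [? [? ?]]. apply Hdmin; auto. Qed.

Lemma greedy_len_max e : In e G -> len X d e <= dmax.
Proof. intro He. destruct (greedy_edges_in_P e He) as [? [? ?]]. apply Hdmax; auto. Qed.

Lemma band_range : exists J : nat, dmax / dmin < 2 ^ S J /\ INR (S J) <= 1 + lg alpha.
Proof.
  assert (Ha1 : 1 <= alpha).
  { rewrite Halpha. pose proof (Hdmin p0 q0 Hp0 Hq0 Hpq0). pose proof (Hdmax p0 q0 Hp0 Hq0 Hpq0).
    apply Rmult_le_reg_r with dmin; auto. unfold Rdiv. rewrite Rmult_assoc, Rinv_l; lra. }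
  destruct (exists_pow2_bracket alpha Ha1) as [J [HJ1 HJ2]].
  exists J. rewrite <- Halpha, S_INR. split; auto. pose proof (lg_ge_exponent alpha J HJ1). lra.
Qed.

Lemma one_le_1_plus_lg_alpha : 1 <= 1 + lg alpha.
Proof. destruct band_range as [J [_ HJ]]. rewrite S_INR in HJ. pose proof (pos_INR J). lra. Qed.

Lemma greedy_size_le : INR (length G) <= 2 * INR (length P) * Rpower (2 * s) (17 * gamma).
Proof.
  pose proof gamma_ge1. destruct band_range as [J [HJ _]].
  destruct (exists_pow2_between (4 * rep_ratio s)) as [M1 [HM1 HM1']]; [unfold rep_ratio; lra|].
  destruct (exists_pow2_bracket (rep_ratio s)) as [m [Hm_lo Hm']]; [unfold rep_ratio; lra|].
  eapply Rle_trans; [apply (edge_count_le X d Hm gamma Hdb s Hs P HPn G greedy_unblocked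
    greedy_edges_in_P dmin dmax Hdmin0 greedy_len_min greedy_len_max J HJ (S m) M1); lra|].
  assert (HK : doubling_const gamma ^ M1 <= Rpower (2 * s) (9 * gamma)).
  { apply doubling_const_pow_le; try lra. replace 9 with (INR 9) by (simpl; ring).
    rewrite Rpower_2s_nat by auto. pose proof (pow_2s_ge s 9 Hs ltac:(lia)).
    unfold rep_ratio in *. simpl in *. lra. }
  assert (Hm2 : INR (2 * S m) <= Rpower (2 * s) (8 * gamma)).
  { replace 8 with (INR 8) by (simpl; ring). eapply Rle_trans; [|apply pow_le_Rpower_2s; auto].
    pose proof (INR_le_pow2 (S m)). pose proof (pow_2s_ge s 8 Hs ltac:(lia)).
    rewrite mult_INR. unfold rep_ratio in *. simpl in *. lra. }
  replace (17 * gamma) with (9 * gamma + 8 * gamma) by ring. rewrite Rpower_plus.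
  pose proof (doubling_const_pow_ge0 gamma M1). pose proof (pos_INR (2 * S m)). pose proof (pos_INR (length P)).
  assert (doubling_const gamma ^ M1 * INR (2 * S m) <= Rpower (2 * s) (9 * gamma) * Rpower (2 * s) (8 * gamma))
    by (apply Rmult_le_compat; auto). nra.
Qed.

Lemma greedy_degree_le v : INR (degree X G v) <= (1 + lg alpha) * Rpower (2 * s) (5 * gamma).
Proof.
  pose proof gamma_ge1. destruct band_range as [J [HJ HJlg]].
  destruct (exists_pow2_between (4 * (2 * s + 2))) as [M2 [HM2 HM2']]; [lra|].
  eapply Rle_trans; [apply (degree_le X d Hm gamma Hdb s Hs G greedy_unblocked dmin dmax
    Hdmin0 greedy_len_min greedy_len_max J HJ v M2 HM2)|].
  apply Rmult_le_compat; [apply pos_INR|apply doubling_const_pow_ge0|auto|].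
  apply doubling_const_pow_le; try lra. replace 5 with (INR 5) by (simpl; ring).
  rewrite Rpower_2s_nat by auto. pose proof (pow_2s_ge s 5 Hs ltac:(lia)). simpl in *. lra.
Qed.

Variable T : list (X * X).
Hypothesis HT : spanning_tree X d P T.

Lemma greedy_weight_le : weight X d G <= 16 * (1 + lg alpha) * weight X d T * Rpower (2 * s) (11 * gamma).
Proof.
  pose proof gamma_ge1. destruct band_range as [J [HJ HJlg]]. destruct HT as [_ [_ HTc]].
  destruct (exists_pow2_between (4 * rep_ratio s)) as [M1 [HM1 HM1']]; [unfold rep_ratio; lra|].
  pose proof (weight_nonneg X d Hm T) as HW0.
  change (weight X d G) with (sumR (len X d) G).
  eapply Rle_trans; [apply (weight_le X d Hm gamma Hdb s Hs P G greedy_unblocked greedy_edges_in_P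
    dmin dmax Hdmin0 greedy_len_min greedy_len_max J HJ T (weight X d T) eq_refl HTc HW0 M1 HM1)|].
  assert (HK : doubling_const gamma ^ M1 <= Rpower (2 * s) (9 * gamma)).
  { apply doubling_const_pow_le; try lra. replace 9 with (INR 9) by (simpl; ring).
    rewrite Rpower_2s_nat by auto. pose proof (pow_2s_ge s 9 Hs ltac:(lia)).
    unfold rep_ratio in *. simpl in *. lra. }
  assert (Hk : 2 * s + 2 <= Rpower (2 * s) (2 * gamma)).
  { pose proof (pow_le_Rpower_2s s 2 gamma Hs H) as Hp. replace (INR 2) with 2 in Hp by (simpl; ring).
    pose proof (pow_2s_ge s 2 Hs ltac:(lia)). simpl in *. lra. }
  replace (11 * gamma) with (2 * gamma + 9 * gamma) by ring. rewrite Rpower_plus.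
  pose proof (doubling_const_pow_ge0 gamma M1). pose proof (pos_INR (S J)).
  assert ((2 * s + 2) * doubling_const gamma ^ M1 <= Rpower (2 * s) (2 * gamma) * Rpower (2 * s) (9 * gamma))
    by (apply Rmult_le_compat; lra).
  assert (INR (S J) * ((2 * s + 2) * doubling_const gamma ^ M1)
          <= (1 + lg alpha) * (Rpower (2 * s) (2 * gamma) * Rpower (2 * s) (9 * gamma)))
    by (apply Rmult_le_compat; auto; apply Rmult_le_pos; lra).
  nra.
Qed.
End GreedyBounds.

Lemma absorb_into_exponent s gamma a b (k : nat) x : 1 < s -> 1 <= gamma -> a <= b -> 0 <= x ->
  x * Rpower (2 * s) (a * gamma) <= gamma ^ k * x * Rpower (2 * s) (b * gamma).
Proof.
  intros Hs Hg Hab Hx. pose proof (pow_R1_Rle gamma k Hg). pose proof (Rpower_2s_pos s (b * gamma)).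
  assert (Rpower (2 * s) (a * gamma) <= Rpower (2 * s) (b * gamma))
    by (apply Rpower_2s_le; auto; apply Rmult_le_compat_r; lra).
  assert (0 <= x * Rpower (2 * s) (b * gamma)) by (apply Rmult_le_pos; lra).
  apply Rle_trans with (x * Rpower (2 * s) (b * gamma)); [apply Rmult_le_compat_l; auto|nra].
Qed.

Theorem theorem13 :
  exists C c : R, 0 < C /\ 0 < c /\
  forall (X : Type) (dist : X -> X -> R), is_metric X dist ->
  forall gamma : R, doubling_dimension X dist gamma ->
  forall (P : list X), NoDup P ->
  forall alpha : R, aspect_ratio X dist P alpha ->
  forall mst : R, mst_weight X dist P mst ->
  forall s : R, 1 < s ->
  forall (ord : list (X * X)), valid_order X P ord ->
  forall G : list (X * X), run X dist s [] ord G ->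
  let n := INR (length P) in
  let sfac := Rpower (2 * s) (c * gamma) in
  (forall p q, In p P -> In q P ->
     exists L, walk_len dist G p q L /\ L <= (s + 1) / (s - 1) * dist p q) /\
  weight X dist G <= C * gamma ^ 9 * (1 + lg alpha) * mst * sfac /\
  INR (length G) <= C * gamma ^ 4 * n * sfac /\
  (forall v, In v P -> INR (degree X G v) <= C * gamma ^ 4 * (1 + lg alpha) * sfac) /\
  2 * INR (length G) / n <= C * gamma ^ 4 * sfac.
Proof.
  exists 16, 20. split; [lra|]. split; [lra|].
  intros X d Hm gamma [Hdb _] P HPn alpha Har mst [[T [HT <-]] _] s Hs ord Hord G Hrun n sfac.
  destruct Har as [dmax [dmin [[p0 [q0 [Hp0 [Hq0 [Hpq0 _]]]]]
                     [Hdmax [[p1 [q1 [Hp1 [Hq1 [Hpq1 Hdmin_eq]]]]] [Hdmin Halpha]]]]]].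
  assert (Hdmin0 : 0 < dmin) by (rewrite <- Hdmin_eq; apply (d_pos X d Hm); auto).
  pose proof (gamma_ge1 X d Hm gamma Hdb p0 q0 Hpq0) as Hg.
  pose proof (one_le_1_plus_lg_alpha X d P dmin dmax alpha p0 q0 Hp0 Hq0 Hpq0 Hdmin0 Hdmin Hdmax Halpha).
  assert (Hn : 0 < n) by (apply lt_0_INR; destruct P; [destruct Hp0|simpl; lia]).
  assert (Hedges : INR (length G) <= gamma ^ 4 * (2 * n) * sfac).
  { eapply Rle_trans; [apply (greedy_size_le X d Hm gamma Hdb P HPn s Hs ord G Hord Hrun dmin dmax alpha
      p0 q0 Hp0 Hq0 Hpq0 Hdmin0 Hdmin Hdmax Halpha)|]. apply absorb_into_exponent; lra. }
  assert (0 < sfac) by apply Rpower_2s_pos. pose proof (pow_R1_Rle gamma 4 Hg).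
  assert (0 <= gamma ^ 4 * n * sfac) by (apply Rmult_le_pos; [apply Rmult_le_pos|]; lra).
  repeat split.
  - apply (greedy_spanner X d Hm P s Hs ord G Hord Hrun).
  - eapply Rle_trans; [apply (greedy_weight_le X d Hm gamma Hdb P s Hs ord G Hord Hrun dmin dmax alpha
      p0 q0 Hp0 Hq0 Hpq0 Hdmin0 Hdmin Hdmax Halpha T HT)|].
    replace (16 * gamma ^ 9 * (1 + lg alpha) * weight X d T * sfac)
      with (gamma ^ 9 * (16 * (1 + lg alpha) * weight X d T) * sfac) by ring.
    apply absorb_into_exponent; try lra. pose proof (weight_nonneg X d Hm T). nra.
  - lra.
  - intros v _. eapply Rle_trans; [apply (greedy_degree_le X d Hm gamma Hdb P s Hs ord G Hord Hrun dmin dmax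
      alpha p0 q0 Hp0 Hq0 Hpq0 Hdmin0 Hdmin Hdmax Halpha v)|].
    apply Rle_trans with (gamma ^ 4 * (1 + lg alpha) * sfac); [apply absorb_into_exponent; lra|nra].
  - apply Rmult_le_reg_r with n; auto. unfold Rdiv. rewrite Rmult_assoc, Rinv_l by lra. nra.
Qed.
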